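(* Let $B$ be an $n\times n$ matrix of non-negative integers whose last $n-m$ rows are zero, where $m\neq n$. Suppose $A=J_{nm}+B=(a_{kl})$ is irreducible and its top-left $m\times m$ corner is irreducible. Let $x_1,\dots,x_n$ be non-negative integers, not all zero, and let $m<j\le n$. Let $A'$ be the $(n+1)\times(n+1)$ matrix defined as follows: - its first row is $(x_j,x_1,x_2,\dots,x_n)$; - for $i=1,\dots,m$, its $(i+1)$-st row is $(a_{ij},a_{i1},a_{i2},\dots,a_{in})$; - its last $n-m$ rows consist entirely of $\infty$. Then $A\sim_M A'$.
   Context: $J_{nm}$ ($0\le m\le n$) is the $n\times n$ matrix whose $i$-th row, for $i\le m$, has a $1$ in position $i$ and $0$ elsewhere, and whose last $n-m$ rows consist entirely of $\infty$. Arithmetic convention: $\infty+a=\infty$. For an $X\times X$ matrix $A$ with entries in $\{0,1,2,\dots\}\cup\{\infty\}$, $G_A$ is the graph with vertex set $X$ and exactly $A(x,y)$ edges from $x$ to $y$. A matrix $A$ is irreducible if $G_A$ is strongly connected. For matrices, $A\sim_M B$ means $G_A\sim_M G_B$. A graph may have multiple edges and loops. A source receives no edges, a sink emits no edges, and an infinite emitter emits infinitely many edges. A vertex is singular if it is a sink or infinite emitter, and regular otherwise. Move-equivalence $\sim_M$ is the smallest equivalence relation on graphs with finitely many vertices such that $G\sim_M E$ whenever $E$ is isomorphic to a graph obtained from $G$ by one of the following moves. (S) Delete a regular source together with the edges it emits. (R) For a regular vertex $u$ emitting exactly one edge $f$, with $r(f)\neq u$, and all of whose incoming edges have the same source $v$: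 delete $u$, $f$ and the edges into $u$, and add for each $e\in r^{-1}(u)$ an edge $[ef]$ from $v$ to $r(f)$. (O) Out-splitting at a non-sink $v$ along a partition $\mathcal E_1,\dots,\mathcal E_n$ of $s^{-1}(v)$ with at most one infinite part. Replace $v$ by $v^1,\dots,v^n$. Each edge $e$ into $v$ becomes copies $e^1,\dots,e^n$ with $r(e^i)=v^i$ and source $s(e)$, or source $v^j$ if $s(e)=v$ and $e\in\mathcal E_j$. An edge from $v$ to $w\neq v$ lying in $\mathcal E_i$ gets source $v^i$. (I) In-splitting at a regular non-source $v$ along a partition $\mathcal E_1,\dots,\mathcal E_n$ of $r^{-1}(v)$. Replace $v$ by $v^1,\dots,v^n$. Each edge $e$ out of $v$ becomes copies $e^1,\dots,e^n$ with $s(e^i)=v^i$ and range $r(e)$, or range $v^j$ if $r(e)=v$ and $e\in\mathcal E_j$. An edge into $v$ from $w\neq v$ lying in $\mathcal E_i$ gets range $v^i$. *)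

From mathcomp Require Import all_boot all_algebra.
From Stdlib Require Import Relations.
Set Implicit Arguments. Unset Strict Implicit. Unset Printing Implicit Defensive.

Record graph := Graph {
  gV : finType;
  gE : Type;
  gs : gE -> gV;
  gr : gE -> gV
}.

Section GraphNotions.
Variable G : graph.

Definition source (v : gV G) : Prop := forall e, gr e <> v.
Definition sink (v : gV G) : Prop := forall e, gs e <> v.

Definition finite_edges (Q : gE G -> Prop) : Prop :=
  exists (k : nat) (g : 'I_k -> gE G), forall e, Q e -> exists i, g i = e.

Definition infinite_emitter (v : gV G) : Prop :=
  ~ finite_edges (fun e => gs e = v).
Definition singular (v : gV G) : Prop := sink v \/ infinite_emitter v.
Definition regular (v : gV G) : Prop := ~ singular v.

Definition adj (x y : gV G) : Prop := exists e, gs e = x /\ gr e = y.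
Definition strongly_connected : Prop :=
  forall x y : gV G, clos_refl_trans (gV G) adj x y.
End GraphNotions.

Definition realizes (H : graph) (V : finType) (P : V -> Prop) (E' : Type)
    (s' r' : E' -> V) : Prop :=
  exists (fV : gV H -> V) (fE : gE H -> E'),
    injective fV /\ (forall w, P w <-> exists x, fV x = w) /\ bijective fE /\
    forall e, fV (gs e) = s' (fE e) /\ fV (gr e) = r' (fE e).
Arguments realizes H {V} P E' s' r'.

Definition move_S (G H : graph) : Prop :=
  exists v : gV G, regular v /\ source v /\
    realizes H (fun w => w <> v) {e : gE G | gs e <> v}
      (fun e => gs (proj1_sig e)) (fun e => gr (proj1_sig e)).

Definition R_edges (G : graph) (u : gV G) : Type :=
  ({e : gE G | gs e <> u /\ gr e <> u} + {e : gE G | gr e = u})%type.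

Definition move_R (G H : graph) : Prop :=
  exists (u v : gV G) (f : gE G),
    regular u /\ (forall e, gs e = u <-> e = f) /\ gr f <> u /\
    (forall e, gr e = u -> gs e = v) /\
    realizes H (fun w => w <> u) (R_edges u)
      (fun e => match e with inl e => gs (proj1_sig e) | inr _ => v end)
      (fun e => match e with inl e => gr (proj1_sig e) | inr _ => gr f end).

(** New vertices: V \ {v} (as inl) and v^1..v^n
    (as inr i). *)
Definition out_part (G : graph) (v : gV G) (k : nat) (p : gE G -> 'I_k)
  (i : 'I_k) : gE G -> Prop := fun e => gs e = v /\ p e = i.

Definition move_O (G H : graph) : Prop :=
  exists (v : gV G) (k : nat) (p : gE G -> 'I_k),
    ~ sink v /\
    (forall i, exists e, out_part v p i e) /\
    (forall i i', ~ finite_edges (out_part v p i) ->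
                  ~ finite_edges (out_part v p i') -> i = i') /\
    let sv e : (gV G + 'I_k)%type :=
        if gs e == v then inr (p e) else inl (gs e) in
    realizes H
      (fun w : (gV G + 'I_k)%type =>
          match w with inl x => x <> v | inr _ => True end)
      ({e : gE G | gr e <> v} + ({e : gE G | gr e = v} * 'I_k))%type
      (fun e => match e with inl e => sv (proj1_sig e)
                           | inr (e, _) => sv (proj1_sig e) end)
      (fun e => match e with inl e => inl (gr (proj1_sig e))
                           | inr (_, i) => inr i end).

Definition move_I (G H : graph) : Prop :=
  exists (v : gV G) (k : nat) (p : gE G -> 'I_k),
    regular v /\ ~ source v /\
    (forall i, exists e, gr e = v /\ p e = i) /\
    let rv e : (gV G + 'I_k)%type :=
        if gr e == v then inr (p e) else inl (gr e) in
    realizes H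
      (fun w : (gV G + 'I_k)%type =>
          match w with inl x => x <> v | inr _ => True end)
      ({e : gE G | gs e <> v} + ({e : gE G | gs e = v} * 'I_k))%type
      (fun e => match e with inl e => inl (gs (proj1_sig e))
                           | inr (_, i) => inr i end)
      (fun e => match e with inl e => rv (proj1_sig e)
                           | inr (e, _) => rv (proj1_sig e) end).

Definition move_step (G H : graph) : Prop :=
  move_S G H \/ move_R G H \/ move_O G H \/ move_I G H.

(** Move equivalence: the smallest equivalence relation containing the moves
    (up to isomorphism, built into [realizes]). *)
Definition move_equiv : graph -> graph -> Prop :=
  clos_refl_sym_trans graph move_step.

Inductive natinf := Fin of nat | Inf.

Definition addinf (a b : natinf) : natinf :=
  match a, b with Fin x, Fin y => Fin (x + y) | _, _ => Inf end.

Definition ltinf (k : nat) (a : natinf) : bool :=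
  match a with Fin x => k < x | Inf => true end.

(** G_A: vertex set 'I_N, exactly A x y edges from x to y *)
Definition graph_of (N : nat) (A : 'M[natinf]_N) : graph :=
  @Graph 'I_N {t : 'I_N * 'I_N * nat | ltinf t.2 (A t.1.1 t.1.2)}
    (fun t => (proj1_sig t).1.1) (fun t => (proj1_sig t).1.2).

Definition irreducible (N : nat) (A : 'M[natinf]_N) : Prop :=
  strongly_connected (graph_of A).

Definition matrix_move_equiv (N N' : nat) (A : 'M[natinf]_N)
  (A' : 'M[natinf]_N') : Prop := move_equiv (graph_of A) (graph_of A').

(** J_{nm} (0-indexed rows: rows i < m are unit rows, the others are ∞) *)
Definition Jnm (n m : nat) : 'M[natinf]_n :=
  \matrix_(i < n, k < n) if (i < m)%N then Fin (i == k : nat) else Inf.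

Definition JplusB (n m : nat) (B : 'M[nat]_n) : 'M[natinf]_n :=
  \matrix_(i < n, k < n) addinf (Jnm n m i k) (Fin (B i k)).

Definition corner (n m : nat) (H : (m <= n)%N) (A : 'M[natinf]_n)
  : 'M[natinf]_m :=
  \matrix_(i < m, k < m) A (widen_ord H i) (widen_ord H k).

(** The (n+1)x(n+1) matrix A' of the statement (0-indexed; j is the
    0-indexed version of the paper's j). Row/column 0 is the new one;
    row/column c+1 corresponds to the old index c. *)
Definition shift_row (n : nat) (j : 'I_n) (f : 'I_n -> natinf)
  (c : 'I_n.+1) : natinf :=
  match unlift ord0 c with None => f j | Some k => f k end.

Definition Aprime (n m : nat) (A : 'M[natinf]_n) (x : 'I_n -> nat)
  (j : 'I_n) : 'M[natinf]_n.+1 :=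
  \matrix_(r < n.+1, c < n.+1)
    match unlift ord0 r with
    | None => shift_row j (fun k => Fin (x k)) c
    | Some i => if (i < m)%N then shift_row j (A i) c else Inf
    end.

From mathcomp Require Import all_boot all_algebra.
From Stdlib Require Import Relations ProofIrrelevance.
Set Implicit Arguments. Unset Strict Implicit. Unset Printing Implicit Defensive.

(* Since j >= m, row j of A is all ∞, i.e. j is an infinite emitter of G_A.
   Out-split j into two vertices: for every column b, the first x_b edges
   from j to b go to the first copy and the remaining infinitely many to the
   second.  The first copy then has row (x_j, x_1, ..., x_n), the second keeps
   the row of ∞'s, and every edge into j is doubled, which produces the extra
   column; the result is exactly G_{A'}. *)

Lemma ord2P (i : 'I_2) : i = ord0 \/ i = ord_max.
Proof. by case: i => [[|[|//]] hi]; [left | right]; apply: val_inj. Qed.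

(* Index k of A corresponds to index lift ord0 k of A', and j is split into
   the two indices ord0 (copy ord0) and lift ord0 j (copy ord_max). *)
Section SplitIndex.
Variables (n : nat) (j : 'I_n).

Definition merge_idx (c : 'I_n.+1) : 'I_n :=
  if unlift ord0 c is Some k then k else j.

Definition copy_idx (c : 'I_n.+1) : 'I_2 := if c == ord0 then ord0 else ord_max.

Definition split_idx (b : 'I_n) (i : 'I_2) : 'I_n.+1 :=
  if (b == j) && (i == ord0) then ord0 else lift ord0 b.

Lemma copy_idx_lift k : copy_idx (lift ord0 k) = ord_max.
Proof. by rewrite /copy_idx eq_sym (negbTE (neq_lift _ _)). Qed.

Lemma merge_idx0 : merge_idx ord0 = j.
Proof. by rewrite /merge_idx unlift_none. Qed.

Lemma merge_idx_lift k : merge_idx (lift ord0 k) = k.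
Proof. by rewrite /merge_idx liftK. Qed.

Lemma merge_split_idx b i : merge_idx (split_idx b i) = b.
Proof.
rewrite /merge_idx /split_idx; case: ifP => [/andP[/eqP-> _]|_].
  by rewrite unlift_none.
by rewrite liftK.
Qed.

Lemma split_merge_idx c : split_idx (merge_idx c) (copy_idx c) = c.
Proof.
rewrite /merge_idx /split_idx; case: unliftP => [k ->|->].
  by rewrite copy_idx_lift andbF.
by rewrite /copy_idx !eqxx.
Qed.

Lemma copy_split_idx i : copy_idx (split_idx j i) = i.
Proof.
rewrite /split_idx eqxx /=.
by case: (ord2P i) => ->; rewrite ?copy_idx_lift // /copy_idx eqxx.
Qed.

Lemma split_idx_id b i i' : b != j -> split_idx b i = split_idx b i'.
Proof. by rewrite /split_idx => /negbTE->. Qed.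

Definition split_vertex (c : 'I_n.+1) : 'I_n + 'I_2 :=
  if merge_idx c == j then inr (copy_idx c) else inl (merge_idx c).

Lemma split_vertex_inj : injective split_vertex.
Proof.
move=> c1 c2 e; rewrite -[c1]split_merge_idx -[c2]split_merge_idx.
move: e; rewrite /split_vertex.
case: eqP => [->|_]; case: eqP => [->|/eqP n2] // [e].
  by rewrite e.
by rewrite e; apply: split_idx_id.
Qed.

Lemma split_vertex_image (w : 'I_n + 'I_2) :
  match w with inl b => b <> j | inr _ => True end <->
  exists c, split_vertex c = w.
Proof.
split.
  case: w => [b /eqP nb|i _].
    exists (split_idx b ord0).
    by rewrite /split_vertex merge_split_idx (negbTE nb).
  exists (split_idx j i).
  by rewrite /split_vertex merge_split_idx eqxx copy_split_idx.
case=> c <-; rewrite /split_vertex; case: eqP => // /eqP.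
Qed.

End SplitIndex.

Section OutSplit.
Variables (n m : nat) (A : 'M[natinf]_n) (x : 'I_n -> nat) (j : 'I_n).
Hypothesis A_inf_rows : forall k b : 'I_n, (m <= k)%N -> A k b = Inf.
Hypothesis j_ge_m : (m <= j)%N.
Hypothesis x_neq0 : exists k, x k <> 0%N.

Local Notation A' := (Aprime m A x j).
Local Notation G := (graph_of A).
Local Notation H := (graph_of A').
Local Notation merge_idx := (merge_idx j).
Local Notation split_idx := (split_idx j).

Lemma Aprime0 c : A' ord0 c = Fin (x (merge_idx c)).
Proof. by rewrite mxE unlift_none /shift_row /merge_idx; case: unlift. Qed.

Lemma Aprime_lift k c : A' (lift ord0 k) c = A k (merge_idx c).
Proof.
rewrite mxE liftK; case: ifP => [_|/negbT].
  by rewrite /shift_row /merge_idx; case: unlift.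
by rewrite -leqNgt => /A_inf_rows->.
Qed.

Lemma edge_from_j b t : ltinf t (A j b).
Proof. by rewrite A_inf_rows. Qed.

Definition split_part (e : gE G) : 'I_2 :=
  if (val e).2 < x (val e).1.2 then ord0 else ord_max.

(* Edges of G_A and G_A' are triples (source, range, index below the entry);
   an edge from j to b of index t >= x_b becomes the edge of index t - x_b
   out of the second copy of j. *)
Definition split_triple (u : 'I_n * 'I_n * nat) (i : 'I_2) :
    'I_n.+1 * 'I_n.+1 * nat :=
  let: (a, b, t) := u in
  if a == j then
    if t < x b then (ord0, split_idx b i, t)
    else (lift ord0 j, split_idx b i, t - x b)
  else (lift ord0 a, split_idx b i, t).

Definition merge_triple (v : 'I_n.+1 * 'I_n.+1 * nat) : 'I_n * 'I_n * nat :=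
  (merge_idx v.1.1, merge_idx v.1.2,
   if v.1.1 == lift ord0 j then v.2 + x (merge_idx v.1.2) else v.2).

Lemma split_tripleP u i : ltinf u.2 (A u.1.1 u.1.2) ->
  ltinf (split_triple u i).2 (A' (split_triple u i).1.1 (split_triple u i).1.2).
Proof.
case: u => [[a b] t] /= h; case: eqP => [_|_].
  case: ifP => ht /=; rewrite ?Aprime0 ?Aprime_lift merge_split_idx //.
  exact: edge_from_j.
by rewrite /= Aprime_lift merge_split_idx.
Qed.

Lemma merge_tripleP v : ltinf v.2 (A' v.1.1 v.1.2) ->
  ltinf (merge_triple v).2 (A (merge_triple v).1.1 (merge_triple v).1.2).
Proof.
case: v => [[r c] t] /=; case: (unliftP ord0 r) => [k ->|->].
  2: by rewrite merge_idx0 edge_from_j.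
rewrite merge_idx_lift Aprime_lift; case: eqP => [/lift_inj-> _|//].
exact: edge_from_j.
Qed.

Lemma merge_split_triple u i : merge_triple (split_triple u i) = u.
Proof.
case: u => [[a b] t] /=; case: eqP => [->|na].
  case: ifP => ht; rewrite /merge_triple /=.
    by rewrite merge_idx0 merge_split_idx.
  by rewrite merge_idx_lift merge_split_idx eqxx subnK // leqNgt ht.
rewrite /merge_triple /= merge_idx_lift merge_split_idx (inj_eq lift_inj).
by case: eqP.
Qed.

Lemma split_merge_triple v : ltinf v.2 (A' v.1.1 v.1.2) ->
  split_triple (merge_triple v) (copy_idx v.1.2) = v.
Proof.
case: v => [[r c] t] /=; case: (unliftP ord0 r) => [k ->|->].
  rewrite merge_idx_lift Aprime_lift (inj_eq lift_inj).
  case: eqP => [->|/eqP/negbTE nk] /= _; last by rewrite split_merge_idx.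
  by rewrite ltnNge leq_addl /= addnK split_merge_idx.
rewrite merge_idx0 eqxx Aprime0 (negbTE (neq_lift _ _)) /= => ->.
by rewrite split_merge_idx.
Qed.

Lemma split_triple_col u i : (split_triple u i).1.2 = split_idx u.1.2 i.
Proof. by case: u => [[a b] t] /=; case: eqP => _ //; case: ifP. Qed.

Lemma split_triple_id u i i' :
  u.1.2 <> j -> split_triple u i = split_triple u i'.
Proof.
by case: u => [[a b] t] /= /eqP nb; rewrite (split_idx_id i i' nb).
Qed.

Definition split_edge (e : gE G) (i : 'I_2) : gE H :=
  exist _ (split_triple (val e) i) (split_tripleP i (valP e)).

Definition merge_edge (e : gE H) : gE G :=
  exist _ (merge_triple (val e)) (merge_tripleP (valP e)).

Lemma merge_split_edge e i : merge_edge (split_edge e i) = e.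
Proof. by apply: val_inj; rewrite /= merge_split_triple. Qed.

Lemma split_merge_edge e : split_edge (merge_edge e) (copy_idx (gr e)) = e.
Proof. by apply: val_inj; apply: split_merge_triple (valP e). Qed.

Lemma split_edge_id (e : gE G) i i' :
  gr e <> j -> split_edge e i = split_edge e i'.
Proof. by move=> h; apply: val_inj; apply: split_triple_id. Qed.

Definition split_edges : Type :=
  ({e : gE G | gr e <> j} + ({e : gE G | gr e = j} * 'I_2))%type.

Definition tag_edge (e : gE G) (i : 'I_2) : split_edges :=
  match gr e =P j with
  | ReflectT h => inr (exist _ e h, i)
  | ReflectF h => inl (exist _ e h)
  end.

Lemma tag_edge_in (e : gE G) i (h : gr e = j) :
  tag_edge e i = inr (exist _ e h, i).
Proof.
rewrite /tag_edge; case: eqP => [h'|//].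
by congr (inr (_, _)); apply: subset_eq_compat.
Qed.

Lemma tag_edge_out (e : gE G) i (h : gr e <> j) :
  tag_edge e i = inl (exist _ e h).
Proof.
rewrite /tag_edge; case: eqP => [//|h'].
by congr inl; apply: subset_eq_compat.
Qed.

Definition untag_edge (f : split_edges) : gE H :=
  match f with
  | inl e => split_edge (proj1_sig e) ord0
  | inr (e, i) => split_edge (proj1_sig e) i
  end.

Definition tag_merge_edge (e : gE H) : split_edges :=
  tag_edge (merge_edge e) (copy_idx (gr e)).

Lemma tag_merge_edgeK : cancel tag_merge_edge untag_edge.
Proof.
move=> e; rewrite /tag_merge_edge; case: (gr (merge_edge e) =P j) => h.
  by rewrite (tag_edge_in _ h) /= split_merge_edge.
by rewrite (tag_edge_out _ h) /= (split_edge_id ord0 (copy_idx (gr e)) h)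
  split_merge_edge.
Qed.

Lemma untag_edgeK : cancel untag_edge tag_merge_edge.
Proof.
rewrite /tag_merge_edge; case=> [[e h]|[[e h] i]] /=; rewrite merge_split_edge.
  by rewrite (tag_edge_out _ h).
have hj : (val e).1.2 = j := h.
by rewrite split_triple_col hj copy_split_idx (tag_edge_in _ h).
Qed.

Lemma split_part_merge_edge (e : gE H) :
  gs (merge_edge e) = j -> split_part (merge_edge e) = copy_idx (gs e).
Proof.
case: e => [[[r c] t] /= h]; rewrite /split_part /=.
case: (unliftP ord0 r) => [k ->|->] in h *.
  rewrite merge_idx_lift => ->.
  by rewrite eqxx ltnNge leq_addl copy_idx_lift.
by rewrite Aprime0 /= in h; rewrite (negbTE (neq_lift _ _)) h /copy_idx eqxx.
Qed.

Lemma split_vertex_gs (e : gE H) :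
  split_vertex j (gs e) = if gs (merge_edge e) == j
                          then inr (split_part (merge_edge e))
                          else inl (gs (merge_edge e)).
Proof. by rewrite /split_vertex; case: eqP => // /split_part_merge_edge->. Qed.

Lemma j_not_sink : ~ sink (j : gV G).
Proof. by move/(_ (exist _ (j, j, 0) (edge_from_j j 0))). Qed.

Lemma split_parts_nonempty i : exists e, out_part (j : gV G) split_part i e.
Proof.
case: (ord2P i) => ->.
  case: x_neq0 => k /eqP xk; exists (exist _ (j, k, 0) (edge_from_j k 0)).
  by rewrite /out_part /split_part /= lt0n xk.
exists (exist _ (j, j, x j) (edge_from_j j (x j))).
by rewrite /out_part /split_part /= ltnn.
Qed.

(* All edges of the first part have index below max_b x_b. *)
Lemma split_part0_finite : finite_edges (out_part (j : gV G) split_part ord0).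
Proof.
pose M := \max_(b < n) x b.
exists #|{: 'I_n * 'I_M}|,
  (fun i => exist _ (j, (enum_val i).1, val (enum_val i).2) (edge_from_j _ _)).
move=> [[[a b] t] h] [/= ea]; subst a.
rewrite /split_part /=; case: ifP => // ht _.
have tM : t < M by apply: leq_trans ht (leq_bigmax b).
by exists (enum_rank (b, Ordinal tM)); apply: val_inj; rewrite /= enum_rankK.
Qed.

Lemma out_split_Aprime : move_O G H.
Proof.
exists j, 2, split_part; split; first exact: j_not_sink.
split; first exact: split_parts_nonempty.
split.
  move=> i i'; case: (ord2P i) => [-> /(_ split_part0_finite)//|->].
  by case: (ord2P i') => [-> _ /(_ split_part0_finite)|->].
exists (split_vertex j), tag_merge_edge; split; first exact: split_vertex_inj.
split; first exact: split_vertex_image.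
split; first exact: Bijective tag_merge_edgeK untag_edgeK.
move=> e; rewrite /tag_merge_edge split_vertex_gs /split_vertex.
case: (gr (merge_edge e) =P j) => h.
  by rewrite (tag_edge_in _ h); case: eqP.
by rewrite (tag_edge_out _ h); case: eqP => // /h.
Qed.

End OutSplit.

Lemma JplusB_inf_rows n m (B : 'M[nat]_n) (k b : 'I_n) :
  (m <= k)%N -> JplusB m B k b = Inf.
Proof. by rewrite !mxE ltnNge => ->. Qed.

Theorem lemma8p1 (n m : nat) (Hmn : (m <= n)%N) (B : 'M[nat]_n)
    (x : 'I_n -> nat) (j : 'I_n) :
  m <> n ->
  (forall i k : 'I_n, (m <= i)%N -> B i k = 0%N) ->
  irreducible (JplusB m B) ->
  irreducible (corner Hmn (JplusB m B)) ->
  (exists k, x k <> 0%N) ->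
  (m <= j)%N ->
  matrix_move_equiv (JplusB m B) (Aprime m (JplusB m B) x j).
Proof.
move=> _ _ _ _ x_neq0 j_ge_m.
apply: rst_step; right; right; left.
exact: out_split_Aprime (@JplusB_inf_rows n m B) j_ge_m x_neq0.
Qed.
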